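(* Let $F$ be a uniform dill map on $A^{\mathbb N}$ and $m\in\mathbb N$. Consider $F$ and $G=\sigma^m\circ F$ as maps on $A^{\mathbb N}$ equipped with the Besicovitch pseudo-metric $\mathfrak d_H$. Then: (1) if $F$ is sensitive, then $G$ is sensitive; (2) if $x$ is an equicontinuous point of $F$, then $x$ is an equicontinuous point of $G$; (3) if $F$ is equicontinuous, then $G$ is equicontinuous.
   Context: $A$ is a finite alphabet, $\sigma$ the shift $\sigma(x)_i=x_{i+1}$ on $A^{\mathbb N}$, $x_{[i,j)}=x_i\cdots x_{j-1}$. A dill map with diameter $\delta\ge1$ and local rule $f:A^\delta\to A^+$ is $F(x)=f(x_{[0,\delta)})f(x_{[1,\delta+1)})\cdots$; it is uniform if all words $f(u)$, $u\in A^\delta$, have the same length. For equal-length words $d_H(u,v)$ is the number of differing positions, and $\mathfrak d_H(x,y)=\limsup_{l\to\infty}d_H(x_{[0,l)},y_{[0,l)})/l$. For a map $H$ and pseudo-metric $d=\mathfrak d_H$: $x$ is an equicontinuous point of $H$ if $\forall\varepsilon>0\ \exists\eta>0\ \forall y,\ d(x,y)<\eta\Rightarrow\forall t\in\mathbb N,\ d(H^t(x),H^t(y))<\varepsilon$; $H$ is equicontinuous if $\forall\varepsilon>0\ \exists\eta>0\ \forall x,y,\ d(x,y)<\eta\Rightarrow\forall t,\ d(H^t(x),H^t(y))<\varepsilon$; $H$ is sensitive if $\exists\varepsilon>0\ \forall x\ \forall\eta>0\ \exists y,\ d(x,y)<\eta$ and $\exists t\in\mathbb N,\ d(H^t(x),H^t(y))>\varepsilon$.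 *)

From HB Require Import structures.
From mathcomp Require Import all_boot all_order all_algebra.
From mathcomp Require Import all_classical all_reals all_analysis.
Set Implicit Arguments. Unset Strict Implicit. Unset Printing Implicit Defensive.
Import Order.TTheory GRing.Theory Num.Theory.
Local Open Scope ring_scope.

Definition config (A : finType) := nat -> A.

Definition sigma_shift (A : finType) (x : config A) : config A := fun i => x i.+1.

Definition window (A : finType) (delta : nat) (x : config A) (j : nat)
  : delta.-tuple A := [tuple x (j + val i)%N | i < delta].

(* A local rule of a dill map: f : A^delta -> A^+ (nonempty words). *)
Definition local_rule_ok (A : finType) (delta : nat) (f : delta.-tuple A -> seq A) :=
  (1 <= delta)%N /\ forall u, (0 < size (f u))%N.

Definition dill_prefix_len (A : finType) (delta : nat) (f : delta.-tuple A -> seq A)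
  (x : config A) (n : nat) : nat := (\sum_(j < n) size (f (window delta x j)))%N.

(* F(x) = f(x_[0,delta)) f(x_[1,delta+1)) ... : the i-th letter lies in block n,
   the least n with i < L (n+1) (n <= i since all blocks are nonempty), at
   offset i - L n. *)
Definition dill (A : finType) (delta : nat) (f : delta.-tuple A -> seq A)
  (x : config A) : config A := fun i =>
  let n := find (fun n => i < dill_prefix_len f x n.+1)%N (iota 0 i.+1) in
  nth (x 0%N) (f (window delta x n)) (i - dill_prefix_len f x n)%N.

Definition uniform_rule (A : finType) (delta : nat) (f : delta.-tuple A -> seq A) :=
  forall u v, size (f u) = size (f v).

Definition hamming_prefix (A : finType) (x y : config A) (l : nat) : nat :=
  #|[set i : 'I_l | x i != y i]|.

Definition besicovitch (R : realType) (A : finType) (x y : config A) : R :=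
  limn_sup (fun l : nat => (hamming_prefix x y l)%:R / l%:R : R).

Definition dill_equicontinuous_point (R : realType) (A : finType)
  (H : config A -> config A) (x : config A) : Prop :=
  forall eps : R, 0 < eps -> exists2 eta : R, 0 < eta &
    forall y, besicovitch R x y < eta ->
      forall t : nat, besicovitch R (iter t H x) (iter t H y) < eps.

Definition dill_equicontinuous (R : realType) (A : finType)
  (H : config A -> config A) : Prop :=
  forall eps : R, 0 < eps -> exists2 eta : R, 0 < eta &
    forall x y, besicovitch R x y < eta ->
      forall t : nat, besicovitch R (iter t H x) (iter t H y) < eps.

Definition dill_sensitive (R : realType) (A : finType)
  (H : config A -> config A) : Prop :=
  exists2 eps : R, 0 < eps & forall x (eta : R), 0 < eta ->
    exists y, besicovitch R x y < eta /\
      exists t : nat, eps < besicovitch R (iter t H x) (iter t H y).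

Arguments besicovitch R {A} x y.
Arguments dill_equicontinuous_point R {A} H x.
Arguments dill_equicontinuous R {A} H.
Arguments dill_sensitive R {A} H.

From HB Require Import structures.
From mathcomp Require Import all_boot all_order all_algebra.
From mathcomp Require Import all_classical all_reals all_analysis.
From mathcomp Require Import zify lra.
Set Implicit Arguments. Unset Strict Implicit. Unset Printing Implicit Defensive.
Import Order.TTheory GRing.Theory Num.Theory.
Local Open Scope classical_set_scope.
Local Open Scope ring_scope.

(* A uniform dill map with block length k satisfies F (sigma^c x) = sigma^(k c) (F x),
   so by induction G^t x = sigma^(c_t) (F^t x) for a shift c_t depending only on t.
   Shifting both configurations by c changes the Hamming distance of the length-l
   prefixes by at most c, which disappears in the limsup of the densities: the
   Besicovitch pseudo-metric is shift invariant.  Hence the orbits of x and y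
   under F and under G are at the same distances at every time t, and the three
   properties transfer verbatim. *)

Section LimnSup.
Variable R : realType.
Implicit Types u v w : nat -> R.

Lemma limn_sup_le_cvg0 u v : bounded_fun u ->
  (fun l => v l - u l) @ \oo --> 0 -> limn_sup v <= limn_sup u.
Proof.
move=> bu vu0.
have vu_bounded : bounded_fun (fun l => v l - u l).
  by apply: cvg_seq_bounded; apply/cvg_ex; exists 0.
have -> : v = u \+ (fun l => v l - u l) by apply/funext => l /=; rewrite addrC subrK.
apply: le_trans (le_limn_supD bu vu_bounded) _.
by rewrite (cvg_limn_inf_sup vu0).2 addr0.
Qed.

Lemma limn_sup_eq_dominated u v w : bounded_fun u -> bounded_fun v ->
  (forall l, `|v l - u l| <= w l) -> w @ \oo --> 0 -> limn_sup u = limn_sup v.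
Proof.
move=> bu bv vuw w0.
have vu0 : (fun l => v l - u l) @ \oo --> 0.
  apply: norm_cvg0; apply: (squeeze_cvgr _ (@cvg_cst R^o _ _ _ _) w0).
  by apply: nearW => l; rewrite normr_ge0 vuw.
apply/eqP; rewrite eq_le !limn_sup_le_cvg0 //.
rewrite -oppr0; under eq_fun do rewrite -opprB; exact: cvgN.
Qed.

Lemma cvg_divn0 (c : R) : (fun l : nat => c / l%:R) @ \oo --> 0.
Proof.
rewrite -(@cvg_shiftS R^o (fun l : nat => c / l%:R)).
by have := cvgMl_tmp (a := c) (@cvg_harmonic R); rewrite mulr0; apply.
Qed.

Lemma dist_divn_le (a b c l : nat) : (a <= b + c)%N -> (b <= a + c)%N ->
  `|a%:R / l%:R - b%:R / l%:R| <= c%:R / l%:R :> R.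
Proof.
move=> ab ba; rewrite -mulrBl normrM [X in _ * X]ger0_norm ?invr_ge0 //.
apply: ler_wpM2r; first by rewrite invr_ge0.
have ab' : a%:R <= b%:R + c%:R :> R by rewrite -natrD ler_nat.
have ba' : b%:R <= a%:R + c%:R :> R by rewrite -natrD ler_nat.
by rewrite ler_distl; apply/andP; split; lra.
Qed.

End LimnSup.

Section Shift.
Variable A : finType.
Implicit Types x y : config A.

Definition shiftn (c : nat) x : config A := fun i => x (i + c)%N.

Lemma iter_sigma_shift c x : iter c (@sigma_shift A) x = shiftn c x.
Proof.
elim: c => [|c IH] /=; apply/funext => i; rewrite /shiftn ?addn0 //.
by rewrite IH /sigma_shift /shiftn addSnnS.
Qed.

Lemma shiftn_shiftn a b x : shiftn a (shiftn b x) = shiftn (a + b) x.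
Proof. by apply/funext => i; rewrite /shiftn addnA. Qed.

Lemma hamming_prefixE x y l : hamming_prefix x y l = (\sum_(i < l) (x i != y i))%N.
Proof.
rewrite /hamming_prefix -sum1_card big_mkcond /=.
by apply: eq_bigr => i _; rewrite inE; case: (x i != y i).
Qed.

Lemma hamming_prefix_le x y l : (hamming_prefix x y l <= l)%N.
Proof. by rewrite /hamming_prefix -[leqRHS]card_ord max_card. Qed.

Lemma hamming_prefixD x y c l :
  hamming_prefix x y (c + l) = (hamming_prefix x y c + hamming_prefix (shiftn c x) (shiftn c y) l)%N.
Proof.
rewrite !hamming_prefixE big_split_ord; congr addn.
by apply: eq_bigr => i _; rewrite /shiftn /= addnC.
Qed.

Lemma hamming_prefix_shiftn x y c l :
  (hamming_prefix (shiftn c x) (shiftn c y) l <= hamming_prefix x y l + c)%N /\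
  (hamming_prefix x y l <= hamming_prefix (shiftn c x) (shiftn c y) l + c)%N.
Proof.
have := hamming_prefix_le x y c; have := hamming_prefix_le (shiftn l x) (shiftn l y) c.
have := hamming_prefixD x y c l; rewrite -[(c + l)%N]addnC hamming_prefixD; lia.
Qed.

Variable R : realType.

Lemma bounded_hamming_density x y :
  bounded_fun (fun l : nat => (hamming_prefix x y l)%:R / l%:R : R).
Proof.
rewrite /bounded_near; near=> M => l _ /=.
apply: (@le_trans _ _ 1); last by near: M; apply: nbhs_pinfty_ge.
rewrite ger0_norm ?divr_ge0 //; case: l => [|l]; first by rewrite invr0 mulr0.
by rewrite ler_pdivrMr // mul1r ler_nat hamming_prefix_le.
Unshelve. all: by end_near. Qed.

Lemma besicovitch_shiftn c x y :
  besicovitch R (shiftn c x) (shiftn c y) = besicovitch R x y.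
Proof.
apply: limn_sup_eq_dominated (cvg_divn0 c%:R); try exact: bounded_hamming_density.
by move=> l; have [? ?] := hamming_prefix_shiftn x y c l; exact: dist_divn_le.
Qed.

End Shift.

Lemma find_iota0 (p : pred nat) N n : (n < N)%N -> p n ->
  (forall j, (j < n)%N -> ~~ p j) -> find p (iota 0 N) = n.
Proof.
move=> nN pn before_n.
rewrite -(subnKC (ltnW nN)) iotaD find_cat size_iota.
have -> : has p (iota 0 n) = false.
  by apply/hasPn => j; rewrite mem_iota add0n => /andP[_ /before_n].
by rewrite -(prednK (n := (N - n)%N)) ?subn_gt0 //= pn addn0.
Qed.

Section UniformDill.
Variables (A : finType) (delta k : nat) (f : delta.-tuple A -> seq A).
Hypotheses (k_gt0 : (0 < k)%N) (size_f : forall u, size (f u) = k).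

Lemma dill_prefix_len_uniform x n : dill_prefix_len f x n = (n * k)%N.
Proof.
by rewrite /dill_prefix_len (eq_bigr (fun _ => k)) ?sum_nat_const ?card_ord // => j _.
Qed.

Lemma dill_uniformE x i :
  dill f x i = nth (x 0%N) (f (window delta x (i %/ k))) (i %% k).
Proof.
rewrite /dill (@find_iota0 _ _ (i %/ k)) /= ?dill_prefix_len_uniform.
- by congr nth; rewrite {1}(divn_eq i k) addKn.
- by rewrite ltnS leq_div.
- by rewrite ltn_ceil.
- move=> j lt_j; rewrite -leqNgt; apply: leq_trans (leq_divM i k).
  by rewrite dill_prefix_len_uniform leq_mul2r lt_j orbT.
Qed.

Lemma dill_shiftn c x : dill f (shiftn c x) = shiftn (k * c) (dill f x).
Proof.
apply/funext => i; rewrite /shiftn !dill_uniformE.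
rewrite [(i + k * c)%N]addnC (mulnC k) divnMDl // modnMDl.
have -> : window delta (shiftn c x) (i %/ k) = window delta x (c + i %/ k).
  by apply: eq_mktuple => j; rewrite /shiftn; congr x; lia.
by apply: set_nth_default; rewrite size_f ltn_mod.
Qed.

Lemma iter_shiftn_dill m t : exists c, forall x,
  iter t (fun x => shiftn m (dill f x)) x = shiftn c (iter t (dill f) x).
Proof.
elim: t => [|t [c IH]]; first by exists 0%N => x; apply/funext => i; rewrite /shiftn addn0.
by exists (m + k * c)%N => x /=; rewrite IH dill_shiftn shiftn_shiftn.
Qed.

Lemma besicovitch_iter_shiftn_dill (R : realType) m t x y :
  besicovitch R (iter t (fun x => shiftn m (dill f x)) x)
                (iter t (fun x => shiftn m (dill f x)) y) =
  besicovitch R (iter t (dill f) x) (iter t (dill f) y).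
Proof. by have [c iterE] := iter_shiftn_dill m t; rewrite !iterE besicovitch_shiftn. Qed.

End UniformDill.

Section SameOrbitDistances.
Variables (R : realType) (A : finType) (H1 H2 : config A -> config A).
Hypothesis same_orbit_dist : forall x y t,
  besicovitch R (iter t H2 x) (iter t H2 y) = besicovitch R (iter t H1 x) (iter t H1 y).

Lemma dill_sensitive_transfer : dill_sensitive R H1 -> dill_sensitive R H2.
Proof.
case=> eps eps_gt0 sens; exists eps => // x eta eta_gt0.
have [y [xy [t sep]]] := sens x eta eta_gt0.
by exists y; split => //; exists t; rewrite same_orbit_dist.
Qed.

Lemma dill_equicontinuous_point_transfer x :
  dill_equicontinuous_point R H1 x -> dill_equicontinuous_point R H2 x.
Proof.
move=> eqx eps eps_gt0; have [eta eta_gt0 close] := eqx eps eps_gt0.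
by exists eta => // y xy t; rewrite same_orbit_dist; apply: close.
Qed.

Lemma dill_equicontinuous_transfer :
  dill_equicontinuous R H1 -> dill_equicontinuous R H2.
Proof.
move=> eqH eps eps_gt0; have [eta eta_gt0 close] := eqH eps eps_gt0.
by exists eta => // x y xy t; rewrite same_orbit_dist; apply: close.
Qed.

End SameOrbitDistances.

Theorem mainTheorem5 (R : realType) (A : finType) (delta : nat)
  (f : delta.-tuple A -> seq A) (m : nat) :
  local_rule_ok f -> uniform_rule f ->
  let F := dill f in
  let G := fun x => iter m (@sigma_shift A) (F x) in
  (dill_sensitive R F -> dill_sensitive R G) /\
  (forall x, dill_equicontinuous_point R F x -> dill_equicontinuous_point R G x) /\
  (dill_equicontinuous R F -> dill_equicontinuous R G).
Proof.
move=> [_ size_gt0] uniform F G.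
have same_orbit_dist x y t :
    besicovitch R (iter t G x) (iter t G y) = besicovitch R (iter t F x) (iter t F y).
  have -> : G = fun x => shiftn m (F x) by apply/funext => z; rewrite /G iter_sigma_shift.
  pose k := size (f (window delta x 0)).
  exact: (@besicovitch_iter_shiftn_dill _ _ k _ (size_gt0 _) (uniform ^~ _)).
split; [|split].
- exact: dill_sensitive_transfer.
- exact: dill_equicontinuous_point_transfer.
- exact: dill_equicontinuous_transfer.
Qed.
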